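(* (1) $\mathcal{K}^{\mathsf{TJ}}(\overline{K_n})=\{k:k\ge2\}$ for $n\ge2$. (2) $\mathcal{K}^{\mathsf{TJ}}(\overline{K_{1,n}})=\{k:k\ge2\}$ for $n\ge1$. (3) $\mathcal{K}^{\mathsf{TJ}}(\overline{K_{m,n}})=\{k:k\ge2\}$ for $2\le m\le n$. (4) $\mathcal{K}^{\mathsf{TJ}}(\overline{B_p})=\{k:k\ge2\}$ for $p\ge1$. (5) $\mathcal{K}^{\mathsf{TJ}}(\overline{P_n})=\{k:k\ge2\}$ for $3\le n\le5$, and $=\varnothing$ for $n\ge6$. (6) $\mathcal{K}^{\mathsf{TJ}}(\overline{C_n})=\{k:k\ge2\}$ for $4\le n\le6$, and $=\varnothing$ for $n\ge7$. (7) $\mathcal{K}^{\mathsf{TJ}}(\overline{F_p})=\{k:k\ge2\}$ for $p\in\{1,2\}$, $\mathcal{K}^{\mathsf{TJ}}(\overline{F_3})=\{2\}$, and $\mathcal{K}^{\mathsf{TJ}}(\overline{F_p})=\varnothing$ for $p\ge4$.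
   Context: All graphs are finite, simple, undirected; $\overline{G}$ denotes the complement of $G$. A $k$-clique of a graph $H$ is a set of $k$ pairwise adjacent vertices. For a graph $H$ and integer $k\ge1$, the Token Jumping graph $\mathsf{TJ}_k(H)$ has as vertices the $k$-cliques of $H$, and two $k$-cliques $A,B$ are adjacent iff $|A\cap B|=k-1$. For a graph $G$, $\mathcal{K}^{\mathsf{TJ}}(G)=\{k\ge1:\ \exists H,\ \mathsf{TJ}_k(H)\cong G\}$. $K_n$, $P_n$, $C_n$ denote the complete graph, path, cycle on $n$ vertices; $K_{m,n}$ the complete bipartite graph. The book graph $B_p$ consists of $p$ triangles sharing a common edge; the friendship graph $F_p$ consists of $p$ triangles sharing a common vertex. *)

From mathcomp Require Import all_boot.
Set Implicit Arguments. Unset Strict Implicit. Unset Printing Implicit Defensive.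

Definition compl (V : finType) (e : rel V) : rel V :=
  fun x y => (x != y) && ~~ e x y.

Definition is_kclique (V : finType) (e : rel V) (k : nat) (A : {set V}) : bool :=
  (#|A| == k) && [forall x in A, forall y in A, (x != y) ==> e x y].

(* TJ_k(H) is isomorphic to G = (VG, eG), where H = (VH, eH):
   an explicit bijection f from the vertices of G onto the k-cliques of H
   such that x ~ y in G iff |f x ∩ f y| = k - 1. *)
Definition TJ_iso (VH : finType) (eH : rel VH) (k : nat)
    (VG : finType) (eG : rel VG) : Prop :=
  exists f : VG -> {set VH},
    [/\ injective f,
        (forall x, is_kclique eH k (f x)),
        (forall A, is_kclique eH k A -> exists x, f x = A) &
        (forall x y, eG x y = (#|f x :&: f y| == k - 1))].

Definition KTJ (VG : finType) (eG : rel VG) (k : nat) : Prop :=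
  1 <= k /\
  exists (VH : finType) (eH : rel VH),
    [/\ symmetric eH, irreflexive eH & TJ_iso eH k eG].

Definition Kn_adj (n : nat) : rel 'I_n := fun x y => x != y.
Definition Kmn_adj (m n : nat) : rel ('I_m + 'I_n) :=
  fun x y => match x, y with
             | inl _, inr _ | inr _, inl _ => true
             | _, _ => false end.
(* book graph B_p: spine vertices inl false, inl true; page vertices inr i *)
Definition book_adj (p : nat) : rel (bool + 'I_p) :=
  fun x y => match x, y with
             | inl a, inl b => a != b
             | inl _, inr _ | inr _, inl _ => true
             | inr _, inr _ => false end.
Definition path_adj (n : nat) : rel 'I_n :=
  fun x y => (nat_of_ord y == (nat_of_ord x).+1) || (nat_of_ord x == (nat_of_ord y).+1).
Definition cycle_adj (n : nat) : rel 'I_n :=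
  fun x y => (nat_of_ord y == (nat_of_ord x).+1 %% n) ||
             (nat_of_ord x == (nat_of_ord y).+1 %% n).
(* friendship graph F_p: centre None, triangle i has vertices Some (i,false), Some (i,true) *)
Definition friend_adj (p : nat) : rel (option ('I_p * bool)) :=
  fun x y => match x, y with
             | None, Some _ | Some _, None => true
             | Some (i, a), Some (j, b) => (i == j) && (a != b)
             | None, None => false end.

(* A graph G is TJ_2(R) exactly when it is the line graph L(R), and if moreover R is
   triangle-free then G = TJ_k(K_{k-2} + R) for every k >= 2, where + joins every vertex of
   the clique to every vertex of R.  All the positive cases are line graphs of this kind:
   disjoint unions of cliques (the complements of K_n, K_{m,n}, B_p and F_1) are line graphs
   of disjoint unions of stars, and the small complements of paths, cycles and F_2 have
   explicit triangle-free roots, checked by computation; the complement of F_3 is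
   K_1 + L(K_4), hence only a TJ_2 graph.  TJ_1 graphs are complete, which excludes k = 1.

   For the negative cases, in a TJ_k graph with vertices realized as k-sets, adjacency forces
   intersections of size k - 1 and non-adjacency intersections of size at most k - 2.
   Counting the points of each Venn region turns these constraints into a linear system over
   nat, which has no solution for the complement of P_6 (induced in the complements of P_n,
   n >= 6, and C_n, n >= 7) nor for K_5 minus an edge (induced in the complement of F_p,
   p >= 4).  For the octahedron K_{2,2,2} in the complement of F_3 and k >= 3, the same count
   shows that some triangle of k-sets consists of three hyperplanes of a (k + 1)-set; that set
   is then a clique, and deleting a common point gives a vertex adjacent to the whole
   triangle, which the octahedron does not have. *)

From mathcomp Require Import all_boot zify.
Set Implicit Arguments. Unset Strict Implicit. Unset Printing Implicit Defensive.

Definition clique (V : finType) (e : rel V) (A : {set V}) : Prop :=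
  forall x y, x \in A -> y \in A -> x != y -> e x y.

Lemma is_kcliqueP (V : finType) (e : rel V) k (A : {set V}) :
  reflect (#|A| = k /\ clique e A) (is_kclique e k A).
Proof.
apply: (iffP andP) => [[/eqP cA /forall_inP cl]|[cA cl]]; split => //.
- by move=> x y xA yA; have /forall_inP/(_ y yA)/implyP := cl x xA.
- by apply/eqP.
- by apply/forall_inP => x xA; apply/forall_inP => y yA; apply/implyP; apply: cl.
Qed.

Lemma card_sum_set (X Y : finType) (A : {set X + Y}) :
  #|A| = #|inl @^-1: A| + #|inr @^-1: A|.
Proof.
rewrite -!sum1_card [LHS]big_mkcond big_sumType /=.
by congr (_ + _); rewrite [RHS]big_mkcond; apply: eq_bigr => ? _; rewrite inE.
Qed.

(** * Adding a universal clique *)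

Section JoinClique.
Variables (VR : finType) (eR : rel VR) (t : nat).

Definition join_clique : rel ('I_t + VR) := fun u v =>
  match u, v with
  | inl i, inl j => i != j
  | inr a, inr b => eR a b
  | _, _ => true
  end.

Definition lift_set (B : {set VR}) : {set 'I_t + VR} :=
  [set u | if u is inr a then a \in B else true].

Lemma lift_setI B C : lift_set B :&: lift_set C = lift_set (B :&: C).
Proof. by apply/setP => -[i|a]; rewrite !inE. Qed.

Lemma card_lift_set B : #|lift_set B| = t + #|B|.
Proof.
rewrite card_sum_set; congr (_ + _).
  by rewrite -[RHS]card_ord; apply: eq_card => i; rewrite !inE.
by apply: eq_card => a; rewrite !inE.
Qed.

Lemma lift_set_inj : injective lift_set.
Proof. by move=> B C /setP eBC; apply/setP => a; have := eBC (inr a); rewrite !inE. Qed.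

Lemma clique_lift_set B : clique eR B -> clique join_clique (lift_set B).
Proof.
move=> clB [i|a] [j|b]; rewrite !inE //= => aB bB ab.
by apply: clB => //; apply: contraNneq ab => ->.
Qed.

Lemma join_clique_sym : symmetric eR -> symmetric join_clique.
Proof. by move=> eR_sym [i|a] [j|b] //=; rewrite 1?eq_sym ?eR_sym. Qed.

Lemma join_clique_irr : irreflexive eR -> irreflexive join_clique.
Proof. by move=> eR_irr [i|a] /=; rewrite ?eqxx ?eR_irr. Qed.

(* A (t + j)-clique has at most t vertices in K_t, hence at least j in R. *)
Lemma TJ_iso_join_clique (VG : finType) (eG : rel VG) j :
  0 < j -> (t = 0 \/ forall B, clique eR B -> #|B| <= j) ->
  TJ_iso eR j eG -> TJ_iso join_clique (t + j) eG.
Proof.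
move=> j_gt0 small_cliques [f [f_inj f_cl f_onto eG_f]].
exists (fun x => lift_set (f x)); split.
- by move=> x y /lift_set_inj /f_inj.
- move=> x; have /is_kcliqueP[cfx clfx] := f_cl x.
  by apply/is_kcliqueP; rewrite card_lift_set cfx; split => //; apply: clique_lift_set.
- move=> A /is_kcliqueP[cA clA].
  set B := inr @^-1: A.
  have clB : clique eR B.
    by move=> a b; rewrite !inE => aA bA ab; apply: clA aA bA _; apply: contraNneq ab => -[->].
  set I := inl @^-1: A.
  have cI : #|I| <= t by have := max_card I; rewrite card_ord.
  have cAIB := card_sum_set A; rewrite -/B -/I cA in cAIB.
  have cB : #|B| = j by case: small_cliques => [t0|/(_ B clB)]; lia.
  have [x fx] : exists x, f x = B by apply: f_onto; apply/is_kcliqueP.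
  have IT : I = setT by apply/eqP; rewrite eqEcard subsetT cardsT card_ord; lia.
  exists x; apply/setP => -[i|a]; rewrite inE; last by rewrite fx inE.
  by have := in_setT i; rewrite -IT inE.
- by move=> x y; rewrite eG_f lift_setI card_lift_set; apply/eqP/eqP; lia.
Qed.

End JoinClique.

Arguments join_clique {VR} eR t.

Lemma KTJ_join_clique (VR VG : finType) (eR : rel VR) (eG : rel VG) t j :
  symmetric eR -> irreflexive eR -> 0 < j -> (t = 0 \/ forall B, clique eR B -> #|B| <= j) ->
  TJ_iso eR j eG -> KTJ eG (t + j).
Proof.
move=> eR_sym eR_irr j_gt0 small_cliques iso; split; first lia.
exists ('I_t + VR)%type, (join_clique eR t); split.
- exact: join_clique_sym.
- exact: join_clique_irr.
- exact: TJ_iso_join_clique.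
Qed.

Lemma card_set2I (T : finType) (a b : T) (C : {set T}) :
  a != b -> #|[set a; b] :&: C| = (a \in C) + (b \in C).
Proof.
move=> ab; rewrite (cardsD1 a) (cardsD1 b) !inE !eqxx /= orbT eq_sym (negbTE ab) /=.
suff -> : [set a; b] :&: C :\ a :\ b = set0 by rewrite cards0 addn0.
by apply/setP => u; rewrite !inE; case: (u == b); case: (u == a); rewrite ?andbF.
Qed.

(** * Line graphs *)

Section LineGraph.
Variables (VR VG : finType) (eR : rel VR) (eG : rel VG) (g : VG -> VR * VR).
Hypotheses (eR_sym : symmetric eR) (eR_irr : irreflexive eR).

Definition ends x : {set VR} := [set (g x).1; (g x).2].

Lemma TJ_iso_line_graph :
  (forall x, eR (g x).1 (g x).2) ->
  (forall a b, eR a b -> exists x, ends x = [set a; b]) ->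
  injective ends ->
  (forall x y, eG x y = (#|ends x :&: ends y| == 1)) ->
  TJ_iso eR 2 eG.
Proof.
move=> g_edge g_onto ends_inj eG_ends; exists ends; split => //.
- move=> x; apply/is_kcliqueP; split.
    by rewrite cards2; case: eqP => // e; have := g_edge x; rewrite e eR_irr.
  move=> a b; rewrite !inE => /orP[]/eqP-> /orP[]/eqP->; rewrite ?eqxx //.
  by rewrite eR_sym => _; apply: g_edge.
- move=> A /is_kcliqueP[/eqP/cards2P[a [b [ab ->]]] clA].
  by apply: g_onto; apply: clA ab; rewrite !inE eqxx ?orbT.
Qed.

End LineGraph.

Definition triangle_free (V : finType) (e : rel V) : Prop :=
  forall a b c, e a b -> e b c -> e a c -> False.

Lemma triangle_free_clique (V : finType) (e : rel V) :
  triangle_free e -> forall B, clique e B -> #|B| <= 2.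
Proof.
move=> no_tri B clB; rewrite leqNgt; apply/card_gt2P => -[a [b [c [[aB bB cB] [ab bc ca]]]]].
by apply: (no_tri a b c); apply: clB => //; rewrite eq_sym.
Qed.

Lemma KTJ_line_graph (VR VG : finType) (eR : rel VR) (eG : rel VG) k :
  symmetric eR -> irreflexive eR -> TJ_iso eR 2 eG -> 2 <= k ->
  k = 2 \/ triangle_free eR -> KTJ eG k.
Proof.
move=> eR_sym eR_irr iso k2 k2_or_no_tri; rewrite -(subnK k2).
apply: KTJ_join_clique => //; case: k2_or_no_tri => [->|no_tri]; first by left.
by right; apply: triangle_free_clique.
Qed.

Section DisjointCliques.
Variables (VG C : finType) (c : VG -> C).

Definition star_rel : rel (C + VG) := fun u v =>
  match u, v with
  | inl j, inr x | inr x, inl j => c x == j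
  | _, _ => false
  end.

(* A disjoint union of cliques is the line graph of a disjoint union of stars. *)
Lemma KTJ_disjoint_cliques (eG : rel VG) k :
  (forall x y, eG x y = (x != y) && (c x == c y)) -> 2 <= k -> KTJ eG k.
Proof.
have star_sym : symmetric star_rel by case=> [?|?] [?|?].
have star_irr : irreflexive star_rel by case.
have star_no_tri : triangle_free star_rel by case=> [?|?] [?|?] [?|?].
move=> eGE k2; apply: (KTJ_line_graph star_sym star_irr _ k2 (or_intror star_no_tri)).
apply: (TJ_iso_line_graph (g := fun x => (inl (c x), inr x)) star_sym star_irr) => //=.
- move=> [j|x] [i|y] //= /eqP <-; first by exists y.
  by exists x; rewrite /ends setUC.
- move=> x y /setP/(_ (inr x)); rewrite !inE eqxx /= => /esym/eqP[].
  by move=> ->.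
- move=> x y; rewrite card_set2I // !inE /= (inj_eq inl_inj) (inj_eq inr_inj) eGE.
  by case: (x =P y) => [->|]; rewrite ?eqxx //; case: (c x == c y).
Qed.

End DisjointCliques.

Lemma all_iota n (P : pred nat) i : all P (iota 0 n) -> i < n -> P i.
Proof. by move=> /allP all_P i_lt; apply: all_P; rewrite mem_iota. Qed.

Section EdgeListLineGraph.
Variables (m : nat) (edges : seq (nat * nat)).

Definition edge_adj (a b : nat) : bool := ((a, b) \in edges) || ((b, a) \in edges).

Definition edge_rel : rel 'I_m.+1 := fun a b => edge_adj a b.

Lemma edge_rel_sym : symmetric edge_rel.
Proof. by move=> a b; rewrite /edge_rel /edge_adj orbC. Qed.

Lemma edge_rel_irr : all (fun p => p.1 != p.2) edges -> irreflexive edge_rel.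
Proof.
move=> simple a; rewrite /edge_rel /edge_adj orbb.
by apply/negP => /(allP simple); rewrite /= eqxx.
Qed.

Definition triangle_free_check : bool :=
  all (fun a => all (fun b => all (fun c =>
    ~~ [&& edge_adj a b, edge_adj b c & edge_adj a c]) (iota 0 m.+1)) (iota 0 m.+1)) (iota 0 m.+1).

Lemma triangle_free_checkP : triangle_free_check -> triangle_free edge_rel.
Proof.
move=> chk a b c ab bc ac.
have := all_iota (all_iota (all_iota chk (ltn_ord a)) (ltn_ord b)) (ltn_ord c).
by rewrite /edge_rel in ab bc ac; rewrite ab bc ac.
Qed.

Definition shared (p q : nat * nat) : nat :=
  (p.1 \in [:: q.1; q.2]) + (p.2 \in [:: q.1; q.2]).

(* Vertex [i < n] of G is the edge [nth (0, 0) labels i] of R, and [adj] is the adjacency of G. *)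
Definition line_graph_check (n : nat) (adj : rel nat) (labels : seq (nat * nat)) : bool :=
  let e i := nth (0, 0) labels i in
  [&& all (fun p => p.1 != p.2) edges,
      all (fun p => has (fun i => (e i == p) || (e i == (p.2, p.1))) (iota 0 n)) edges,
      all (fun i => [&& edge_adj (e i).1 (e i).2, (e i).1 <= m & (e i).2 <= m]) (iota 0 n),
      all (fun i => all (fun j => (shared (e i) (e j) == 2) ==> (i == j)) (iota 0 n)) (iota 0 n) &
      all (fun i => all (fun j => adj i j == (shared (e i) (e j) == 1)) (iota 0 n)) (iota 0 n)].

Lemma line_graph_checkP (VG : finType) (eG : rel VG) (code : VG -> nat) n adj labels :
  injective code -> (forall x, code x < n) -> (forall i, i < n -> exists x, code x = i) ->
  (forall x y, eG x y = adj (code x) (code y)) ->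
  line_graph_check n adj labels -> TJ_iso edge_rel 2 eG.
Proof.
move=> code_inj code_lt code_onto eG_code /and5P[irr_chk onto_chk edge_chk inj_chk adj_chk].
set e := fun i => nth (0, 0) labels i.
have edge_irr := edge_rel_irr irr_chk.
have e_ok x := all_iota edge_chk (code_lt x).
pose g x : 'I_m.+1 * 'I_m.+1 := (inord (e (code x)).1, inord (e (code x)).2).
have inord_eq a b : a <= m -> b <= m -> (inord a == inord b :> 'I_m.+1) = (a == b).
  by move=> am bm; rewrite -val_eqE /= !inordK.
have g_edge x : edge_rel (g x).1 (g x).2.
  by have /and3P[ex ex1 ex2] := e_ok x; rewrite /edge_rel /= !inordK.
have g_ne x : (g x).1 != (g x).2.
  by apply: contraTneq (g_edge x) => ->; rewrite edge_irr.
have shared_ends x y : #|ends g x :&: ends g y| = shared (e (code x)) (e (code y)).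
  have /and3P[_ x1 x2] := e_ok x; have /and3P[_ y1 y2] := e_ok y.
  by rewrite card_set2I // /shared !inE !inord_eq.
apply: (TJ_iso_line_graph edge_rel_sym edge_irr g_edge).
- move=> a b ab.
  have [p pE ab_p] : exists2 p, p \in edges & (p == (val a, val b)) || (p == (val b, val a)).
    by case/orP: ab => ?; [exists (val a, val b) | exists (val b, val a)]; rewrite ?eqxx ?orbT.
  have /hasP[i] := allP onto_chk _ pE; rewrite mem_iota add0n => /andP[_ i_lt] ei.
  have [x cx] := code_onto _ i_lt; exists x.
  rewrite /ends /g /= cx.
  by case/orP: ab_p ei => /eqP-> /orP[]/eqP; rewrite -/(e i) => -> /=; rewrite !inord_val // setUC.
- move=> x y exy; apply: code_inj; apply/eqP.
  apply: (implyP (all_iota (all_iota inj_chk (code_lt x)) (code_lt y))).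
  by rewrite -shared_ends exy setIid cards2 g_ne.
- move=> x y; rewrite eG_code shared_ends.
  exact/eqP/(all_iota (all_iota adj_chk (code_lt x)) (code_lt y)).
Qed.

Lemma KTJ_edge_list (VG : finType) (eG : rel VG) (code : VG -> nat) n adj labels k :
  injective code -> (forall x, code x < n) -> (forall i, i < n -> exists x, code x = i) ->
  (forall x y, eG x y = adj (code x) (code y)) ->
  line_graph_check n adj labels -> triangle_free_check || (k == 2) -> 2 <= k -> KTJ eG k.
Proof.
move=> code_inj code_lt code_onto eG_code chk tri k2; have /andP[simple _] := chk.
apply: (KTJ_line_graph edge_rel_sym (edge_rel_irr simple)
  (line_graph_checkP code_inj code_lt code_onto eG_code chk) k2).
by case/orP: tri => [/triangle_free_checkP|/eqP]; [right | left].
Qed.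

Lemma KTJ_edge_list_ord n (eG : rel 'I_n) (adj : rel nat) labels k :
  (forall x y, eG x y = adj x y) ->
  line_graph_check n adj labels -> triangle_free_check || (k == 2) -> 2 <= k -> KTJ eG k.
Proof.
move=> eG_adj; apply: (KTJ_edge_list (code := val)) => //; [exact: val_inj | exact: ltn_ord |].
by move=> i i_lt; exists (Ordinal i_lt).
Qed.

End EdgeListLineGraph.

(** * Venn regions *)

Definition bits6 := (bool * bool * bool * bool * bool * bool)%type.

Definition bit (i : nat) (t : bits6) : bool :=
  match i with
  | 0 => t.1.1.1.1.1 | 1 => t.1.1.1.1.2 | 2 => t.1.1.1.2
  | 3 => t.1.1.2 | 4 => t.1.2 | _ => t.2
  end.

Definition all_bits6 : seq bits6 :=
  let bs := [:: true; false] in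
  let ext (T : Type) (s : seq T) := [seq (t, b) | t <- s, b <- bs] in
  ext _ (ext _ (ext _ (ext _ (ext _ bs)))).

(* Summing over the explicit list lets [simpl] expand a sum over bits6 into its 64 terms. *)
Lemma sum_bits6 (G : bits6 -> nat) :
  \sum_(t : bits6) G t = sumn [seq G t | t <- all_bits6].
Proof.
rewrite sumnE big_map -big_enum /=; apply: perm_big; apply: uniq_perm => //; first exact: enum_uniq.
by move=> t; rewrite mem_enum; case: t => [[[[[[] []] []] []] []] []].
Qed.

Section Venn.
Variables (V : finType) (F : nat -> {set V}).

Definition membership (v : V) : bits6 :=
  (v \in F 0, v \in F 1, v \in F 2, v \in F 3, v \in F 4, v \in F 5).

Lemma bit_membership i v : i < 6 -> bit i (membership v) = (v \in F i).
Proof. by case: i => [|[|[|[|[|[|i]]]]]]. Qed.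

(* [r t] is the number of points of the Venn region with membership pattern [t]. *)
Lemma venn_regions : exists r : bits6 -> nat, forall P : pred bits6,
  #|[set v | P (membership v)]| = sumn [seq (if P t then r t else 0) | t <- all_bits6].
Proof.
exists (fun t => #|[set v | membership v == t]|) => P.
rewrite -sum_bits6 -big_mkcond /= -sum1_card (partition_big membership P) /=;
  last by move=> v; rewrite inE.
apply: eq_bigr => t Pt; rewrite -sum1_card; apply: eq_bigl => v; rewrite !inE.
by case: eqP => [->|]; rewrite ?Pt ?andbF.
Qed.

Lemma venn_cards : exists r : bits6 -> nat,
  [/\ forall i j, i < 6 -> j < 6 ->
        #|F i :&: F j| = sumn [seq (if bit i t && bit j t then r t else 0) | t <- all_bits6],
      forall i j l, i < 6 -> j < 6 -> l < 6 ->
        #|F i :|: F j :|: F l| =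
          sumn [seq (if [|| bit i t, bit j t | bit l t] then r t else 0) | t <- all_bits6] &
      forall i j l, i < 6 -> j < 6 -> l < 6 ->
        #|F i :&: F j :&: F l| =
          sumn [seq (if [&& bit i t, bit j t & bit l t] then r t else 0) | t <- all_bits6]].
Proof.
have [r r_cards] := venn_regions; exists r; split => [i j|i j l|i j l] *; rewrite -r_cards;
  by apply: eq_card => v; rewrite !inE !bit_membership // ?orbA ?andbA.
Qed.

End Venn.

Definition co_path (i j : nat) : bool := (i != j) && ~~ ((j == i.+1) || (i == j.+1)).

(* The complete graph on nat with the edge {0, 1} removed. *)
Definition K_minus_edge (i j : nat) : bool := (i != j) && (i + j != 1).

Definition tj_card_constraint (k : nat) (adj : rel nat) (i j c : nat) : bool :=
  if i == j then c == k else if adj i j then c.+1 == k else c.+2 <= k.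

Lemma venn_co_path6 (V : finType) (F : nat -> {set V}) k :
  ~ (forall i j, i < 6 -> j < 6 -> tj_card_constraint k co_path i j #|F i :&: F j|).
Proof.
move=> tjF; have [r [r2 _ _]] := venn_cards F.
move: (tjF 0 0) (tjF 1 1) (tjF 2 2) (tjF 3 3) (tjF 4 4) (tjF 5 5)
  (tjF 0 1) (tjF 0 2) (tjF 0 3) (tjF 0 4) (tjF 0 5) (tjF 1 2) (tjF 1 3) (tjF 1 4)
  (tjF 1 5) (tjF 2 3) (tjF 2 4) (tjF 2 5) (tjF 3 4) (tjF 3 5) (tjF 4 5).
by rewrite /tj_card_constraint !r2 //=; lia.
Qed.

Lemma venn_K5_minus_edge (V : finType) (F : nat -> {set V}) k :
  ~ (forall i j, i < 5 -> j < 5 -> tj_card_constraint k K_minus_edge i j #|F i :&: F j|).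
Proof.
move=> tjF; have [r [r2 _ _]] := venn_cards F.
move: (tjF 0 0) (tjF 1 1) (tjF 2 2) (tjF 3 3) (tjF 4 4) (tjF 0 1) (tjF 0 2) (tjF 0 3)
  (tjF 0 4) (tjF 1 2) (tjF 1 3) (tjF 1 4) (tjF 2 3) (tjF 2 4) (tjF 3 4).
by rewrite /tj_card_constraint !r2 //=; lia.
Qed.

(* In a diamond of k-sets, one of the two triangles spans only k + 1 points. *)
Lemma venn_diamond (V : finType) (F : nat -> {set V}) k :
  (forall i j, i < 4 -> j < 4 -> tj_card_constraint k K_minus_edge i j #|F i :&: F j|) ->
  exists2 z, z < 2 & #|F 2 :|: F 3 :|: F z| = k.+1 /\ #|F 2 :&: F 3 :&: F z|.+2 = k.
Proof.
move=> tjF; have [r [r2 r3U r3I]] := venn_cards F.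
move: (tjF 0 0) (tjF 1 1) (tjF 2 2) (tjF 3 3) (tjF 0 1) (tjF 0 2) (tjF 0 3)
  (tjF 1 2) (tjF 1 3) (tjF 2 3).
rewrite /tj_card_constraint !r2 //= => *.
have [z0|z1] : (#|F 2 :|: F 3 :|: F 0| = k.+1 /\ #|F 2 :&: F 3 :&: F 0|.+2 = k) \/
               (#|F 2 :|: F 3 :|: F 1| = k.+1 /\ #|F 2 :&: F 3 :&: F 1|.+2 = k).
- by rewrite !r3U // !r3I //=; lia.
- by exists 0.
- by exists 1.
Qed.

(** * Realizations of TJ_k graphs *)

Lemma subset_card_setD1 (V : finType) (X T : {set V}) p :
  X \subset T -> #|X|.+1 = #|T| -> p \in T -> p \notin X -> X = T :\ p.
Proof.
move=> XT cX pT pX; apply/eqP; rewrite eqEcard; apply/andP; split.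
  by apply/subsetP => u uX; rewrite !inE (subsetP XT) // andbT; apply: contraNneq pX => <-.
by have := cardsD1 p T; rewrite pT -cX; lia.
Qed.

(* Each pair of points of T misses one of the three distinct hyperplanes C i. *)
Lemma clique_of_hyperplanes (V : finType) (e : rel V) (T : {set V}) (C : nat -> {set V}) :
  (forall i, i < 3 -> [/\ C i \subset T, #|C i|.+1 = #|T| & clique e (C i)]) ->
  (forall i j, i < 3 -> j < 3 -> C i = C j -> i = j) -> clique e T.
Proof.
move=> hypC C_inj p q pT qT pq.
have hyp_or i : i < 3 -> e p q \/ C i = T :\ p \/ C i = T :\ q.
  move=> /hypC[CT cC clC].
  have [pC|pC] := boolP (p \in C i); last by right; left; apply: subset_card_setD1.
  have [qC|qC] := boolP (q \in C i); last by right; right; apply: subset_card_setD1.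
  by left; apply: clC.
case: (hyp_or 0 isT) => [//|[] C0]; case: (hyp_or 1 isT) => [//|[] C1];
  case: (hyp_or 2 isT) => [//|[] C2].
all: first [ by have := C_inj 0 1 isT isT (etrans C0 (esym C1))
           | by have := C_inj 0 2 isT isT (etrans C0 (esym C2))
           | by have := C_inj 1 2 isT isT (etrans C1 (esym C2)) ].
Qed.

Section Realization.
Variables (VG VH : finType) (eG : rel VG) (eH : rel VH) (k : nat) (f : VG -> {set VH}).
Hypotheses (k_gt0 : 0 < k) (f_inj : injective f) (f_clique : forall x, is_kclique eH k (f x))
  (f_onto : forall A, is_kclique eH k A -> exists x, f x = A)
  (eG_f : forall x y, eG x y = (#|f x :&: f y| == k - 1)).

Lemma card_f x : #|f x| = k.
Proof. by have /is_kcliqueP[] := f_clique x. Qed.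

Lemma clique_f x : clique eH (f x).
Proof. by have /is_kcliqueP[] := f_clique x. Qed.

Lemma eG_irr x : eG x x = false.
Proof. by rewrite eG_f setIid card_f; apply/eqP; lia. Qed.

Lemma eG_sym : symmetric eG.
Proof. by move=> x y; rewrite !eG_f setIC. Qed.

Lemma adj_card x y : eG x y -> #|f x :&: f y|.+1 = k.
Proof. by rewrite eG_f => /eqP->; lia. Qed.

Lemma nadj_card x y : x != y -> ~~ eG x y -> #|f x :&: f y|.+2 <= k.
Proof.
move=> xy; rewrite eG_f => ne.
have le : #|f x :&: f y| <= k by rewrite -(card_f x) subset_leq_card // subsetIl.
suff : #|f x :&: f y| != k by move: ne; lia.
apply: contra xy => /eqP cI.
have fxI : f x :&: f y = f x by apply/eqP; rewrite eqEcard subsetIl card_f cI leqnn.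
by apply/eqP/f_inj/eqP; rewrite eqEcard !card_f leqnn andbT -fxI subsetIr.
Qed.

Lemma tj_card_constraint_induced n (adj : rel nat) (x : nat -> VG) :
  (forall i j, i < n -> j < n -> eG (x i) (x j) = adj i j) ->
  (forall i j, i < n -> j < n -> i != j -> ~~ adj i j -> x i != x j) ->
  forall i j, i < n -> j < n -> tj_card_constraint k adj i j #|f (x i) :&: f (x j)|.
Proof.
move=> x_adj x_inj i j ilt jlt; rewrite /tj_card_constraint -x_adj //.
case: (i =P j) => [->|/eqP ij]; first by rewrite setIid card_f.
case: ifP => [/adj_card -> //|/negbT nadj].
by apply: (nadj_card _ nadj); apply: x_inj => //; rewrite -x_adj.
Qed.

(* Here [f x0], [f x1], [f x2] are hyperplanes of their (k+1)-point union [T], so [T] is a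
   clique, and removing a common point [t] gives a k-clique adjacent to all three. *)
Lemma co_star_common_neighbour x0 x1 x2 : 3 <= k ->
  eG x0 x1 -> eG x0 x2 -> eG x1 x2 ->
  #|f x0 :|: f x1 :|: f x2| = k.+1 -> #|f x0 :&: f x1 :&: f x2|.+2 = k ->
  exists w, [/\ eG w x0, eG w x1 & eG w x2].
Proof.
move=> k3 e01 e02 e12 cT c3.
set T := f x0 :|: f x1 :|: f x2.
have [t tI] : exists t, t \in f x0 :&: f x1 :&: f x2 by apply/card_gt0P; lia.
have sub_T y : y \in [:: x0; x1; x2] -> f y \subset T.
  by rewrite !inE => /or3P[]/eqP->; apply/subsetP => u; rewrite !inE => ->; rewrite ?orbT.
have clT : clique eH T.
  apply: (@clique_of_hyperplanes _ _ _ (fun i => f (nth x0 [:: x0; x1; x2] i))).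
    by move=> i i3; split; [apply: sub_T; rewrite mem_nth | rewrite card_f cT | apply: clique_f].
  move=> [|[|[|//]]] [|[|[|//]]] //= _ _ /f_inj e;
    by move: e01 e02 e12; rewrite e eG_irr.
have tT : t \in T by move: tI; rewrite !inE => /andP[/andP[->]].
have [w fw] : exists w, f w = T :\ t.
  apply: f_onto; apply/is_kcliqueP; split.
    by have := cardsD1 t T; rewrite tT cT; lia.
  by move=> p q /setD1P[_ pT] /setD1P[_ qT]; apply: clT.
have adj_w y : y \in [:: x0; x1; x2] -> t \in f y -> eG w y.
  move=> yx ty; rewrite eG_f fw.
  have -> : (T :\ t) :&: f y = f y :\ t.
    by rewrite setIC setIDA (setIidPl (sub_T y yx)).
  by have := cardsD1 t (f y); rewrite ty card_f; lia.
move: tI; rewrite !inE => /andP[/andP[t0 t1] t2].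
by exists w; split; apply: adj_w; rewrite ?inE ?eqxx ?orbT.
Qed.

Lemma octahedron_common_neighbour x0 x1 z z' : 3 <= k ->
  eG x0 x1 -> eG z x0 -> eG z x1 -> eG z' x0 -> eG z' x1 -> z != z' -> ~~ eG z z' ->
  exists w, [/\ eG w x0, eG w x1 & eG w z \/ eG w z'].
Proof.
move=> k3 e01 ez0 ez1 ez'0 ez'1 zz' nzz'.
pose x i := nth x0 [:: z; z'; x0; x1] i.
have x_adj i j : i < 4 -> j < 4 -> eG (x i) (x j) = K_minus_edge i j.
  case: i j => [|[|[|[|//]]]] [|[|[|[|//]]]] _ _; rewrite /x /K_minus_edge /= ?eG_irr //;
    first [done | by rewrite eG_sym | by rewrite (negbTE nzz') | by rewrite eG_sym (negbTE nzz')].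
have x_inj i j : i < 4 -> j < 4 -> i != j -> ~~ K_minus_edge i j -> x i != x j.
  by case: i j => [|[|[|[|//]]]] [|[|[|[|//]]]] //= _ _ _ _; rewrite // eq_sym.
have [zz zz2 [cU cI]] := venn_diamond (tj_card_constraint_induced x_adj x_inj).
have [ezz0 ezz1] : eG x0 (x zz) /\ eG x1 (x zz).
  by case: zz zz2 {cU cI} => [|[|//]] _; rewrite /x /= [eG x0 _]eG_sym [eG x1 _]eG_sym.
have [w [w0 w1 wz]] := co_star_common_neighbour k3 e01 ezz0 ezz1 cU cI.
by exists w; split => //; case: zz zz2 wz {cU cI ezz0 ezz1} => [|[|//]] _ wz; [left | right].
Qed.

End Realization.

Lemma KTJ_realization (VG : finType) (eG : rel VG) k : KTJ eG k ->
  exists (VH : finType) (eH : rel VH) (f : VG -> {set VH}),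
    [/\ 0 < k, injective f, forall x, is_kclique eH k (f x),
        forall A, is_kclique eH k A -> exists x, f x = A &
        forall x y, eG x y = (#|f x :&: f y| == k - 1)].
Proof. by case=> k_gt0 [VH [eH [_ _ [f [? ? ? ?]]]]]; exists VH, eH, f. Qed.

Lemma KTJ_no_induced_co_path6 (VG : finType) (eG : rel VG) k (x : nat -> VG) :
  (forall i j, i < 6 -> j < 6 -> eG (x i) (x j) = co_path i j) ->
  (forall i j, i < 6 -> j < 6 -> i != j -> ~~ co_path i j -> x i != x j) -> ~ KTJ eG k.
Proof.
move=> x_adj x_inj /KTJ_realization[VH [eH [f [k_gt0 f_inj f_cl _ eG_f]]]].
exact: venn_co_path6 (tj_card_constraint_induced k_gt0 f_inj f_cl eG_f x_adj x_inj).
Qed.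

Lemma KTJ_no_induced_K5_minus_edge (VG : finType) (eG : rel VG) k (x : nat -> VG) :
  (forall i j, i < 5 -> j < 5 -> eG (x i) (x j) = K_minus_edge i j) ->
  (forall i j, i < 5 -> j < 5 -> i != j -> ~~ K_minus_edge i j -> x i != x j) -> ~ KTJ eG k.
Proof.
move=> x_adj x_inj /KTJ_realization[VH [eH [f [k_gt0 f_inj f_cl _ eG_f]]]].
exact: venn_K5_minus_edge (tj_card_constraint_induced k_gt0 f_inj f_cl eG_f x_adj x_inj).
Qed.

Lemma KTJ_octahedron_common_neighbour (VG : finType) (eG : rel VG) k x0 x1 z z' :
  KTJ eG k -> 3 <= k ->
  eG x0 x1 -> eG z x0 -> eG z x1 -> eG z' x0 -> eG z' x1 -> z != z' -> ~~ eG z z' ->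
  exists w, [/\ eG w x0, eG w x1 & eG w z \/ eG w z'].
Proof.
move=> /KTJ_realization[VH [eH [f [k_gt0 f_inj f_cl f_onto eG_f]]]].
exact: octahedron_common_neighbour k_gt0 f_inj f_cl f_onto eG_f x0 x1 z z'.
Qed.

(** * The graphs of the theorem *)

Lemma KTJ_ge2 (VG : finType) (eG : rel VG) (x y : VG) k :
  x != y -> ~~ eG x y -> KTJ eG k -> 2 <= k.
Proof.
move=> xy nxy /KTJ_realization[VH [eH [f [k_gt0 f_inj f_cl _ eG_f]]]].
by have := nadj_card k_gt0 f_inj f_cl eG_f xy nxy; lia.
Qed.

Lemma KTJ_iff_2_le (VG : finType) (eG : rel VG) (x y : VG) :
  x != y -> ~~ eG x y -> (forall k, 2 <= k -> KTJ eG k) -> forall k, KTJ eG k <-> 2 <= k.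
Proof. by move=> xy nxy KTJ_from2 k; split; [apply: KTJ_ge2 xy nxy | apply: KTJ_from2]. Qed.

Lemma KTJ_compl_complete n : 2 <= n -> forall k, KTJ (compl (@Kn_adj n)) k <-> 2 <= k.
Proof.
case: n => [|[|n]] // _; apply: (KTJ_iff_2_le (x := ord0) (y := ord_max)) => // k.
by apply: (KTJ_disjoint_cliques (c := id)) => x y; rewrite /compl /Kn_adj negbK.
Qed.

Lemma KTJ_compl_complete_bipartite m n : 0 < m -> 0 < n ->
  forall k, KTJ (compl (@Kmn_adj m n)) k <-> 2 <= k.
Proof.
case: m n => [|m] [|n] // _ _; apply: (KTJ_iff_2_le (x := inl ord0) (y := inr ord0)) => // k.
apply: (KTJ_disjoint_cliques
  (c := fun u : 'I_m.+1 + 'I_n.+1 => if u is inl _ then true else false)).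
by move=> [i|i] [j|j]; rewrite /compl /= ?andbT ?andbF.
Qed.

Lemma KTJ_compl_book p : forall k, KTJ (compl (@book_adj p)) k <-> 2 <= k.
Proof.
apply: (KTJ_iff_2_le (x := inl false) (y := inl true)) => // k.
apply: (KTJ_disjoint_cliques (c := fun u : bool + 'I_p => if u is inl a then Some a else None)).
by move=> [a|i] [b|j]; rewrite /compl /= ?andbT ?andbF //; case: a b => -[].
Qed.

Lemma compl_pathE n (x y : 'I_n) : compl (@path_adj n) x y = co_path x y.
Proof. by []. Qed.

(* compl P_3 = L(P_3 + K_2), compl P_4 = P_4 = L(P_5), compl P_5 = L(C_4 plus a pendant edge). *)
Lemma KTJ_compl_path_3_5 n : 3 <= n <= 5 -> forall k, KTJ (compl (@path_adj n)) k <-> 2 <= k.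
Proof.
case: n => [|[|[|[|[|[|n]]]]]] // _;
  apply: (KTJ_iff_2_le (x := ord0) (y := lift ord0 ord0)) => // k.
- exact: (KTJ_edge_list_ord (m := 4) (edges := [:: (0, 1); (1, 2); (3, 4)])
    (labels := [:: (0, 1); (3, 4); (1, 2)]) (@compl_pathE 3)).
- exact: (KTJ_edge_list_ord (m := 4) (edges := [:: (0, 1); (1, 2); (2, 3); (3, 4)])
    (labels := [:: (1, 2); (3, 4); (0, 1); (2, 3)]) (@compl_pathE 4)).
- exact: (KTJ_edge_list_ord (m := 4) (edges := [:: (0, 1); (1, 2); (2, 3); (3, 0); (0, 4)])
    (labels := [:: (0, 1); (2, 3); (0, 4); (1, 2); (0, 3)]) (@compl_pathE 5)).
Qed.

Lemma not_KTJ_compl_path n : 6 <= n -> forall k, ~ KTJ (compl (@path_adj n)) k.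
Proof.
case: n => [//|n] n6 k; apply: (KTJ_no_induced_co_path6 (x := fun i => inord i)) => i j i6 j6.
  by rewrite compl_pathE !inordK //; lia.
by move=> ij _; rewrite -val_eqE /= !inordK //; lia.
Qed.

Definition co_cycle (n i j : nat) : bool := (i != j) && ~~ ((j == i.+1 %% n) || (i == j.+1 %% n)).

Lemma compl_cycleE n (x y : 'I_n) : compl (@cycle_adj n) x y = co_cycle n x y.
Proof. by []. Qed.

(* compl C_4 = L(2 P_3), compl C_5 = C_5 = L(C_5), compl C_6 is the prism L(K_{2,3}). *)
Lemma KTJ_compl_cycle_4_6 n : 4 <= n <= 6 -> forall k, KTJ (compl (@cycle_adj n)) k <-> 2 <= k.
Proof.
case: n => [|[|[|[|[|[|[|n]]]]]]] // _;
  apply: (KTJ_iff_2_le (x := ord0) (y := lift ord0 ord0)) => // k.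
- exact: (KTJ_edge_list_ord (m := 5) (edges := [:: (0, 1); (1, 2); (3, 4); (4, 5)])
    (labels := [:: (0, 1); (3, 4); (1, 2); (4, 5)]) (@compl_cycleE 4)).
- exact: (KTJ_edge_list_ord (m := 4) (edges := [:: (0, 1); (1, 2); (2, 3); (3, 4); (4, 0)])
    (labels := [:: (0, 1); (2, 3); (0, 4); (1, 2); (3, 4)]) (@compl_cycleE 5)).
- exact: (KTJ_edge_list_ord (m := 4)
    (edges := [:: (0, 2); (0, 3); (0, 4); (1, 2); (1, 3); (1, 4)])
    (labels := [:: (0, 2); (1, 3); (0, 4); (1, 2); (0, 3); (1, 4)]) (@compl_cycleE 6)).
Qed.

Lemma not_KTJ_compl_cycle n : 7 <= n -> forall k, ~ KTJ (compl (@cycle_adj n)) k.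
Proof.
case: n => [//|n] n7 k; apply: (KTJ_no_induced_co_path6 (x := fun i => inord i)) => i j i6 j6.
  by rewrite compl_cycleE /co_cycle !inordK ?modn_small //; lia.
by move=> ij _; rewrite -val_eqE /= !inordK //; lia.
Qed.

Lemma compl_friend_none p y : compl (@friend_adj p) None y = false.
Proof. by case: y. Qed.

Lemma compl_friend_some p (i j : 'I_p) a b :
  compl (@friend_adj p) (Some (i, a)) (Some (j, b)) = (i != j).
Proof.
rewrite /compl /= (inj_eq (@Some_inj _)) xpair_eqE.
by case: (i == j); case: a b => -[].
Qed.

Lemma KTJ_compl_friendship_1 : forall k, KTJ (compl (@friend_adj 1)) k <-> 2 <= k.
Proof.
apply: (KTJ_iff_2_le (x := None) (y := Some (ord0, false))) => // k.
apply: (KTJ_disjoint_cliques (c := id)) => -[[i a]|] [[j b]|] //=.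
by rewrite compl_friend_some !ord1 eqxx andNb.
Qed.

Definition friend_code p (x : option ('I_p * bool)) : nat :=
  if x is Some (i, b) then (b + i.*2).+1 else 0.

Definition co_friend (c d : nat) : bool := [&& c != 0, d != 0 & c.-1./2 != d.-1./2].

Lemma compl_friendE p x y : compl (@friend_adj p) x y = co_friend (friend_code x) (friend_code y).
Proof.
case: x y => [[i a]|] [[j b]|] //; rewrite ?compl_friend_none //.
by rewrite compl_friend_some /co_friend /= !half_bit_double.
Qed.

Lemma KTJ_compl_friendship_edge_list p m edges labels k :
  line_graph_check m edges p.+1.*2.+1 co_friend labels ->
  triangle_free_check m edges || (k == 2) -> 2 <= k -> KTJ (compl (@friend_adj p.+1)) k.
Proof.
apply: (KTJ_edge_list (code := @friend_code p.+1)) (compl_friendE (p := p.+1)).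
- move=> [[i a]|] [[j b]|] //= [e].
  have /val_inj -> : val i = val j by have := congr1 half e; rewrite !half_bit_double.
  by have := congr1 odd e; rewrite !oddD !odd_double !addbF !oddb => ->.
- by move=> [[i a]|] //=; rewrite -!muln2; have := ltn_ord i; case: a => /=; lia.
- move=> [|c] c_lt; first by exists None.
  exists (Some (inord c./2, odd c)); rewrite /= inordK ?odd_double_half // ltn_half_double.
  by rewrite ltnS in c_lt.
Qed.

(* compl F_2 = K_1 + C_4 = L(K_2 + C_4). *)
Lemma KTJ_compl_friendship_2 : forall k, KTJ (compl (@friend_adj 2)) k <-> 2 <= k.
Proof.
apply: (KTJ_iff_2_le (x := None) (y := Some (ord0, false))) => // k.
exact: (KTJ_compl_friendship_edge_list (m := 5)
  (edges := [:: (0, 1); (2, 3); (3, 4); (4, 5); (5, 2)])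
  (labels := [:: (0, 1); (2, 3); (4, 5); (3, 4); (5, 2)])).
Qed.

(* compl F_3 = K_1 + K_{2,2,2} = L(K_2 + K_4), where K_4 has triangles. *)
Lemma KTJ2_compl_friendship_3 : KTJ (compl (@friend_adj 3)) 2.
Proof.
exact: (KTJ_compl_friendship_edge_list (m := 5)
  (edges := [:: (0, 1); (2, 3); (2, 4); (2, 5); (3, 4); (3, 5); (4, 5)])
  (labels := [:: (0, 1); (2, 3); (4, 5); (2, 4); (3, 5); (2, 5); (3, 4)])).
Qed.

Lemma not_KTJ_compl_friendship_3 k : 3 <= k -> ~ KTJ (compl (@friend_adj 3)) k.
Proof.
move=> k3 tj.
have [w [w0 w1 w2]] := KTJ_octahedron_common_neighbour
  (x0 := Some (@Ordinal 3 0 isT, false)) (x1 := Some (@Ordinal 3 1 isT, false))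
  (z := Some (@Ordinal 3 2 isT, false)) (z' := Some (@Ordinal 3 2 isT, true))
  tj k3 isT isT isT isT isT isT isT.
(* [w] would have to lie in a triangle other than 0, 1 and 2. *)
case: w w0 w1 w2 => [[i b]|] //; rewrite !compl_friend_some.
by case: i => -[|[|[|//]]] ? //= _ _ [].
Qed.

Lemma not_KTJ_compl_friendship p : 4 <= p -> forall k, ~ KTJ (compl (@friend_adj p)) k.
Proof.
case: p => [//|p] p4 k.
apply: (KTJ_no_induced_K5_minus_edge (x := fun i => Some (inord i.-1, i == 0))) => i j i5 j5.
  rewrite compl_friend_some -val_eqE /= !inordK; try lia.
  by rewrite /K_minus_edge; lia.
move=> ij; rewrite /K_minus_edge ij negbK => /eqP ij1.
have [[-> ->]|[-> ->]] : (i = 0 /\ j = 1) \/ (i = 1 /\ j = 0) by lia.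
all: by rewrite (inj_eq (@Some_inj _)) xpair_eqE andbF.
Qed.

Lemma KTJ_compl_friendship_3 k : KTJ (compl (@friend_adj 3)) k <-> k = 2.
Proof.
split=> [tj|->]; last exact: KTJ2_compl_friendship_3.
have k2 : 2 <= k by apply: (KTJ_ge2 (x := None) (y := Some (ord0, false))) tj.
by case: (leqP 3 k) => [/not_KTJ_compl_friendship_3|]; [|lia].
Qed.

Theorem theorem4p10 :
  (* (1) *)
  (forall n, 2 <= n -> forall k, KTJ (compl (@Kn_adj n)) k <-> 2 <= k) /\
  (* (2) *)
  (forall n, 1 <= n -> forall k, KTJ (compl (@Kmn_adj 1 n)) k <-> 2 <= k) /\
  (* (3) *)
  (forall m n, 2 <= m -> m <= n -> forall k, KTJ (compl (@Kmn_adj m n)) k <-> 2 <= k) /\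
  (* (4) *)
  (forall p, 1 <= p -> forall k, KTJ (compl (@book_adj p)) k <-> 2 <= k) /\
  (* (5) *)
  (forall n, 3 <= n <= 5 -> forall k, KTJ (compl (@path_adj n)) k <-> 2 <= k) /\
  (forall n, 6 <= n -> forall k, ~ KTJ (compl (@path_adj n)) k) /\
  (* (6) *)
  (forall n, 4 <= n <= 6 -> forall k, KTJ (compl (@cycle_adj n)) k <-> 2 <= k) /\
  (forall n, 7 <= n -> forall k, ~ KTJ (compl (@cycle_adj n)) k) /\
  (* (7) *)
  (forall p, 1 <= p <= 2 -> forall k, KTJ (compl (@friend_adj p)) k <-> 2 <= k) /\
  (forall k, KTJ (compl (@friend_adj 3)) k <-> k = 2) /\
  (forall p, 4 <= p -> forall k, ~ KTJ (compl (@friend_adj p)) k).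
Proof.
split; first exact: KTJ_compl_complete.
split; first by move=> n; apply: KTJ_compl_complete_bipartite.
split; first by move=> m n m2 mn; apply: KTJ_compl_complete_bipartite; lia.
split; first by move=> p _; apply: KTJ_compl_book.
split; first exact: KTJ_compl_path_3_5.
split; first exact: not_KTJ_compl_path.
split; first exact: KTJ_compl_cycle_4_6.
split; first exact: not_KTJ_compl_cycle.
split.
  move=> [|[|[|p]]] // _.
  - exact: KTJ_compl_friendship_1.
  - exact: KTJ_compl_friendship_2.
split; first exact: KTJ_compl_friendship_3.
exact: not_KTJ_compl_friendship.
Qed.
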